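(* If $J$ is a left (respectively, right) ideal in a C*-algebra, then $J$ possesses a contractive quasi-identity if and only if $J$ has a contractive right (respectively, left) identity. In this case, the contractive right (respectively, left) identity is the only contractive quasi-identity of $J$.
   Context: A quasi-identity of a ring $R$ is an element $e\in R$ with $r=er+re-ere$ for all $r\in R$; it is contractive if $\|e\|\le1$. Ideals are norm-closed. *)

From HB Require Import structures.
From mathcomp Require Import all_boot all_order all_algebra.
From mathcomp Require Import all_classical all_reals all_analysis.
From mathcomp Require Import complex.
Set Implicit Arguments. Unset Strict Implicit. Unset Printing Implicit Defensive.
Import Order.TTheory GRing.Theory Num.Theory.
Local Open Scope ring_scope.
Local Open Scope classical_set_scope.

Record cstar_algebra (R : realType) (V : completeNormedModType R[i])
    (mul : V -> V -> V) (star : V -> V) : Prop := CstarAlgebra {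
  cs_mulA : forall x y z, mul x (mul y z) = mul (mul x y) z;
  cs_mulDl : forall x y z, mul (x + y) z = mul x z + mul y z;
  cs_mulDr : forall x y z, mul x (y + z) = mul x y + mul x z;
  cs_mulZl : forall (a : R[i]) x y, mul (a *: x) y = a *: mul x y;
  cs_mulZr : forall (a : R[i]) x y, mul x (a *: y) = a *: mul x y;
  cs_normM : forall x y, `|mul x y| <= `|x| * `|y|;
  cs_starD : forall x y, star (x + y) = star x + star y;
  cs_starZ : forall (a : R[i]) x, star (a *: x) = a^* *: star x;
  cs_starK : forall x, star (star x) = x;
  cs_starM : forall x y, star (mul x y) = mul (star y) (star x);
  cs_cstar : forall x, `|mul (star x) x| = `|x| ^+ 2
}.

Definition subspace (R : realType) (V : completeNormedModType R[i]) (J : set V) :=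
  [/\ J 0, (forall x y, J x -> J y -> J (x + y)) &
      (forall (a : R[i]) x, J x -> J (a *: x))].

Definition left_ideal (R : realType) (V : completeNormedModType R[i])
    (mul : V -> V -> V) (J : set V) :=
  [/\ subspace J, closed J & forall a x, J x -> J (mul a x)].

Definition right_ideal (R : realType) (V : completeNormedModType R[i])
    (mul : V -> V -> V) (J : set V) :=
  [/\ subspace J, closed J & forall a x, J x -> J (mul x a)].

Definition quasi_identity (R : realType) (V : completeNormedModType R[i])
    (mul : V -> V -> V) (J : set V) (e : V) :=
  J e /\ forall r, J r -> r = mul e r + mul r e - mul (mul e r) e.

Definition right_identity (R : realType) (V : completeNormedModType R[i])
    (mul : V -> V -> V) (J : set V) (e : V) :=
  J e /\ forall r, J r -> mul r e = r.

Definition left_identity (R : realType) (V : completeNormedModType R[i])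
    (mul : V -> V -> V) (J : set V) (e : V) :=
  J e /\ forall r, J r -> mul e r = r.

Definition contractive (R : realType) (V : completeNormedModType R[i]) (e : V) :=
  `|e| <= 1.

From HB Require Import structures.
From mathcomp Require Import all_boot all_order all_algebra.
From mathcomp Require Import all_classical all_reals all_analysis.
From mathcomp Require Import complex.
From mathcomp Require Import ring lra.
Set Implicit Arguments.
Unset Strict Implicit.
Unset Printing Implicit Defensive.
Import Order.TTheory GRing.Theory Num.Theory.
Local Open Scope ring_scope.
Local Open Scope classical_set_scope.
Local Open Scope complex_scope.

(* A quasi-identity e of a left ideal J is automatically a right identity: for
   r in J, s := r - r e satisfies e (a s) = a s for every a, and two uses of the
   C*-identity turn this into s^* s = 0.  Uniqueness then reduces to the fact
   that a contractive idempotent p is self-adjoint.  With k := p^* p and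
   t := k - p we have t^* p = 0, so t^* t = t^* (k - p g) and
   ||t|| <= ||k - p g|| for every g.  When g is self-adjoint and commutes with
   k, (k - p g)^* (k - p g) = k (k + g^2 - 2 g); the iterates of
   x |-> (k + x^2) / 2 from 0 approximate 1 - sqrt (1 - k) without needing a
   unit and make this as small as we like, so t = 0.  Right ideals are left
   ideals of the opposite algebra. *)

Section Gap.
Context {R : realType}.

(* [1 - gap n] bounds the norm of the n-th iterate of x |-> (k + x^2) / 2 from 0
   when ||k|| <= 1, because (1 + (1 - d)^2) / 2 = 1 - (d - d^2 / 2). *)
Fixpoint gap (n : nat) : R := if n is m.+1 then gap m - gap m ^+ 2 / 2 else 1.

Lemma gapS n : gap n.+1 = gap n - gap n ^+ 2 / 2.
Proof. by []. Qed.

Lemma gap_ge0_le1 n : 0 <= gap n <= 1.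
Proof.
elim: n => [|n /andP[d_ge0 d_le1]]; first by rewrite /= ler01 lexx.
by rewrite gapS; apply/andP; split; nra.
Qed.

Lemma gap_mul_le2 n : gap n * (n%:R + 2) <= 2.
Proof.
elim: n => [|n IHn]; first by rewrite /= mul1r add0r.
have /andP[d_ge0 d_le1] := gap_ge0_le1 n.
have n_ge0 : 0 <= n%:R :> R by [].
rewrite gapS -[n.+1%:R]natr1.
have : 0 <= (2 - gap n * (n%:R + 2)) * (2 - gap n) by apply: mulr_ge0; lra.
have := sqr_ge0 (gap n).
nra.
Qed.

Lemma gap_lb_le0 x : (forall n, x <= gap n) -> x <= 0.
Proof.
move=> x_le; rewrite leNgt; apply/negP => x_gt0.
set N := Num.Def.archi_bound (2 / x).
have := archi_boundP (ltW (divr_gt0 (ltr0n _ 2) x_gt0)); rewrite -/N.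
rewrite ltr_pdivrMr // => N_gt.
have := gap_mul_le2 N; have := x_le N.
have N_ge0 : 0 <= N%:R :> R by [].
nra.
Qed.

Lemma gap_step n :
  (gap n - gap n.+1) * (2 - gap n - gap n.+1) / 2 = gap n.+1 - gap n.+2.
Proof. by rewrite !gapS; field. Qed.

End Gap.

(* The norm of a complex normed space is R[i]-valued; [nrm] is its real part.
   It is locked so that [lra] and [nra] treat [nrm x] as an atom. *)
HB.lock Definition nrm (R : realType) (V : normedModType R[i]) (x : V) : R :=
  complex.Re `|x|.
Arguments nrm {R V}.

Section RealNorm.
Context {R : realType} {V : normedModType R[i]}.
Implicit Types x y : V.

Lemma normE x : `|x| = (nrm x)%:C.
Proof. by rewrite nrm.unlock RRe_real // ger0_real. Qed.

Lemma nrm0 : nrm (0 : V) = 0.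
Proof. by rewrite nrm.unlock normr0. Qed.

Lemma nrm_ge0 x : 0 <= nrm x.
Proof. by rewrite -ler0c -normE. Qed.

Lemma nrm_eq0 x : nrm x = 0 -> x = 0.
Proof. by move=> x0; apply: normr0_eq0; rewrite normE x0. Qed.

Lemma nrmD x y : nrm (x + y) <= nrm x + nrm y.
Proof. by rewrite -lecR rmorphD /= -!normE ler_normD. Qed.

Lemma nrmZ (a : R) x : 0 <= a -> nrm (a%:C *: x) = a * nrm x.
Proof.
move=> a0; apply: complexI; rewrite rmorphM /= -!normE normrZ ger0_norm //.
by rewrite ler0c.
Qed.

End RealNorm.

Section CstarAlgebra.
Variables (R : realType) (V : completeNormedModType R[i]).
Variables (mul : V -> V -> V) (star : V -> V).
Hypothesis HA : cstar_algebra mul star.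

Local Notation "x ** y" := (mul x y) (at level 40, left associativity).

Let mulA := cs_mulA HA.
Let mulZl := cs_mulZl HA.
Let mulZr := cs_mulZr HA.
Let starZ := cs_starZ HA.
Let mulDl := cs_mulDl HA.
Let mulDr := cs_mulDr HA.
Let starD := cs_starD HA.
Let starK := cs_starK HA.
Let starM := cs_starM HA.

Lemma mulx0 x : x ** 0 = 0.
Proof. by apply: (@addrI _ (x ** 0)); rewrite -mulDr !addr0. Qed.

Lemma mul0x x : 0 ** x = 0.
Proof. by apply: (@addrI _ (0 ** x)); rewrite -mulDl !addr0. Qed.

Lemma mulxB x y z : x ** (y - z) = x ** y - x ** z.
Proof.
apply: (@addrI _ (x ** z)); rewrite -mulDr addrC subrK.
by rewrite [RHS]addrC subrK.
Qed.

Lemma mulBx x y z : (x - y) ** z = x ** z - y ** z.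
Proof.
apply: (@addrI _ (y ** z)); rewrite -mulDl addrC subrK.
by rewrite [RHS]addrC subrK.
Qed.

Lemma star0 : star 0 = 0.
Proof. by apply: (@addrI _ (star 0)); rewrite -starD !addr0. Qed.

Lemma starB x y : star (x - y) = star x - star y.
Proof.
apply: (@addrI _ (star y)); rewrite -starD addrC subrK.
by rewrite [RHS]addrC subrK.
Qed.

Lemma cstar_eq0 x : star x ** x = 0 -> x = 0.
Proof.
move=> xx0; have := cs_cstar HA x; rewrite xx0 normr0 => /esym/eqP.
by rewrite expf_eq0 /= normr_eq0 => /eqP.
Qed.

Lemma star_fixed_left e z :
  e ** z = z -> e ** (star e ** z) = star e ** z -> star e ** z = z.
Proof.
move=> ez eez; set u := star e ** z - z.
suff /cstar_eq0/eqP : star u ** u = 0 by rewrite subr_eq0 => /eqP.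
by rewrite starB starM starK mulBx !mulxB -!mulA eez ez subrr.
Qed.

Lemma contractive_nrm (e : V) : contractive e -> nrm e <= 1.
Proof. by rewrite /contractive normE -lecR. Qed.

Lemma nrmM x y : nrm (x ** y) <= nrm x * nrm y.
Proof. by rewrite -lecR rmorphM /= -!normE (cs_normM HA). Qed.

Lemma nrm_cstar x : nrm (star x ** x) = nrm x ^+ 2.
Proof. by apply: complexI; rewrite rmorphXn /= -!normE (cs_cstar HA). Qed.

Lemma nrm_star x : nrm (star x) = nrm x.
Proof.
suff le_star y : nrm y <= nrm (star y).
  by apply: le_anti; rewrite le_star -{2}(starK x) le_star.
have [->|y_neq0] := eqVneq (nrm y) 0; first exact: nrm_ge0.
have y_gt0 : 0 < nrm y by rewrite lt_def y_neq0 nrm_ge0.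
by rewrite -(ler_pM2r y_gt0) -expr2 -nrm_cstar nrmM.
Qed.

Lemma nrm_le_star_mul t v : star t ** t = star t ** v -> nrm t <= nrm v.
Proof.
move=> tt_tv; have [->|t_neq0] := eqVneq (nrm t) 0; first exact: nrm_ge0.
have t_gt0 : 0 < nrm t by rewrite lt_def t_neq0 nrm_ge0.
by rewrite -(ler_pM2l t_gt0) -expr2 -nrm_cstar tt_tv -{1}(nrm_star t) nrmM.
Qed.

Lemma sub_sqr_comm c a b :
  a ** b = b ** a -> (c + a ** a) - (c + b ** b) = (a - b) ** (a + b).
Proof.
move=> ab; rewrite opprD addrACA subrr add0r.
by rewrite mulBx !mulDr ab opprD addrA addrK.
Qed.

Let half : R[i] := (2^-1)%:C.

Let half_real : half \is Num.real.
Proof. by rewrite ger0_real // ler0c invr_ge0 ler0n. Qed.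

Section SquareRootIteration.
Variable k : V.
Hypotheses (k_sa : star k = k) (k_le1 : nrm k <= 1).

Fixpoint sqrt_iter n : V :=
  if n is m.+1 then half *: (k + sqrt_iter m ** sqrt_iter m) else 0.

Lemma sqrt_iterS n :
  sqrt_iter n.+1 = half *: (k + sqrt_iter n ** sqrt_iter n).
Proof. by []. Qed.

Lemma sqrt_iter_sa n : star (sqrt_iter n) = sqrt_iter n.
Proof.
elim: n => [|n IHn] /=; first exact: star0.
by rewrite starZ (conj_Creal half_real) starD starM IHn k_sa.
Qed.

Lemma sqrt_iter_commk n : k ** sqrt_iter n = sqrt_iter n ** k.
Proof.
elim: n => [|n IHn] /=; first by rewrite mulx0 mul0x.
rewrite mulZr mulZl mulDr mulDl; congr (_ *: (_ + _)).
by rewrite mulA IHn -mulA IHn mulA.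
Qed.

Lemma sqrt_iter_comm n m :
  sqrt_iter n ** sqrt_iter m = sqrt_iter m ** sqrt_iter n.
Proof.
elim: n m => [|n IHn] m /=; first by rewrite mulx0 mul0x.
rewrite mulZr mulZl mulDr mulDl sqrt_iter_commk; congr (_ *: (_ + _)).
by rewrite mulA -(IHn m) -!mulA (IHn m).
Qed.

Lemma sqrt_iter_double n :
  sqrt_iter n.+1 + sqrt_iter n.+1 = k + sqrt_iter n ** sqrt_iter n.
Proof. by rewrite /= -scalerDl -rmorphD /= -[2^-1]mul1r -splitr scale1r. Qed.

Lemma nrm_sqrt_iter n : nrm (sqrt_iter n) <= 1 - gap n.
Proof.
elim: n => [|n IHn]; first by rewrite /= subrr nrm0.
rewrite /= nrmZ ?invr_ge0 ?ler0n //.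
have gg_le : nrm (sqrt_iter n ** sqrt_iter n) <= (1 - gap n) ^+ 2.
  apply: le_trans (nrmM _ _) _.
  by rewrite expr2; apply: ler_pM; rewrite ?nrm_ge0.
have := le_trans (nrmD _ _) (lerD k_le1 gg_le).
lra.
Qed.

Lemma nrm_sqrt_iter_step n :
  nrm (sqrt_iter n.+1 - sqrt_iter n) <= gap n - gap n.+1.
Proof.
elim: n => [|n IHn].
  rewrite /= subr0 mulx0 addr0 nrmZ ?invr_ge0 ?ler0n //.
  by rewrite expr1n; have := k_le1; lra.
have -> : sqrt_iter n.+2 - sqrt_iter n.+1 = half *:
    ((k + sqrt_iter n.+1 ** sqrt_iter n.+1) - (k + sqrt_iter n ** sqrt_iter n)).
  by rewrite scalerBr -!sqrt_iterS.
rewrite sub_sqr_comm; last exact: sqrt_iter_comm.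
rewrite /half nrmZ ?invr_ge0 ?ler0n // -gap_step mulrC.
rewrite ler_pM2r ?invr_gt0 ?ltr0n //.
apply: le_trans (nrmM _ _) _; apply: ler_pM; rewrite ?nrm_ge0 //.
apply: le_trans (nrmD _ _) _.
have := nrm_sqrt_iter n; have := nrm_sqrt_iter n.+1; lra.
Qed.

End SquareRootIteration.

Section ContractiveIdempotent.
Variable p : V.
Hypotheses (pp : p ** p = p) (p_le1 : nrm p <= 1).

Let k := star p ** p.

Let k_sa : star k = k.
Proof. by rewrite /k starM starK. Qed.

Let k_le1 : nrm k <= 1.
Proof. by rewrite /k nrm_cstar exprn_ile1 ?nrm_ge0. Qed.

Let kp : k ** p = k.
Proof. by rewrite /k -mulA pp. Qed.

Let pk : star p ** k = k.
Proof. by rewrite /k mulA -starM pp. Qed.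

Lemma star_residual_mul g :
  star (k - p) ** (k - p) = star (k - p) ** (k - p ** g).
Proof.
have tp : star (k - p) ** p = 0 by rewrite starB k_sa mulBx kp subrr.
by rewrite !mulxB mulA tp mul0x.
Qed.

Lemma cstar_residual_approx g :
  star g = g -> k ** g = g ** k ->
  star (k - p ** g) ** (k - p ** g) = k ** (k + g ** g - (g + g)).
Proof.
move=> g_sa kg.
have e1 : k ** (p ** g) = k ** g by rewrite mulA kp.
have e2 : g ** star p ** k = k ** g by rewrite -mulA pk kg.
have e3 : g ** star p ** (p ** g) = k ** (g ** g).
  by rewrite mulA -(mulA g) -kg -mulA.
rewrite starB starM g_sa k_sa mulBx !mulxB e1 e2 e3 !mulDr.
move: (k ** k) (k ** g) (k ** (g ** g)) => a b c.
by rewrite opprB opprD !addrA (addrAC a).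
Qed.

Lemma nrm_residual_le n : nrm (k - p) <= gap n.
Proof.
set g := sqrt_iter k n; set g' := sqrt_iter k n.+1.
apply: le_trans (nrm_le_star_mul (star_residual_mul g)) _.
have /andP[gap_ge0 _] := gap_ge0_le1 (R := R) n.
rewrite -(ler_pXn2r (ltn0Sn 1)) ?nnegrE ?nrm_ge0 // -nrm_cstar.
rewrite (cstar_residual_approx (sqrt_iter_sa k_sa n) (sqrt_iter_commk k n)).
rewrite -sqrt_iter_double.
have -> : g' + g' - (g + g) = (g' - g) + (g' - g) by rewrite opprD addrACA.
apply: le_trans (nrmM _ _) _.
apply: le_trans (ler_wpM2r (nrm_ge0 _) k_le1) _; rewrite mul1r.
apply: le_trans (nrmD _ _) _.
have := nrm_sqrt_iter_step k_le1 n; rewrite gapS; lra.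
Qed.

End ContractiveIdempotent.

Lemma contractive_idempotent_sa p : p ** p = p -> nrm p <= 1 -> star p = p.
Proof.
move=> pp p_le1.
have /nrm_eq0/eqP : nrm (star p ** p - p) = 0.
  apply/le_anti; rewrite nrm_ge0 andbT.
  by apply: gap_lb_le0 => n; apply: nrm_residual_le.
by rewrite subr_eq0 => /eqP kp; rewrite -kp starM starK.
Qed.

Section LeftIdeal.
Variable J : set V.
Hypothesis mulJ : forall a x, J x -> J (a ** x).

Lemma quasi_identity_right e : quasi_identity mul J e -> right_identity mul J e.
Proof.
move=> [Je qe]; split=> // r Jr.
have fixed z : J z -> e ** (z - z ** e) = z - z ** e.
  by move=> Jz; rewrite mulxB mulA {3}(qe z Jz) addrAC addrK.
set s := r - r ** e.
have fixed_s a : e ** (a ** s) = a ** s.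
  by rewrite /s mulxB mulA fixed //; apply: mulJ.
have fixed_e : e ** (star e ** (star r ** s)) = star e ** (star r ** s).
  by rewrite [star e ** _]mulA fixed_s.
suff /cstar_eq0/eqP : star s ** s = 0 by rewrite subr_eq0 => /eqP.
rewrite {1}/s starB starM mulBx -mulA.
by rewrite (star_fixed_left (fixed_s _) fixed_e) subrr.
Qed.

Lemma quasi_identityP e : quasi_identity mul J e <-> right_identity mul J e.
Proof.
split; first exact: quasi_identity_right.
move=> [Je re]; split=> // r Jr.
by rewrite re // re; [rewrite addrAC subrr add0r | apply: mulJ].
Qed.

Lemma quasi_identity_unique e :
  right_identity mul J e -> contractive e ->
  forall q, quasi_identity mul J q -> contractive q -> q = e.
Proof.
move=> [Je eR] /contractive_nrm e_le1 q.
move=> /quasi_identity_right[Jq qR] /contractive_nrm q_le1.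
have e_sa := contractive_idempotent_sa (eR e Je) e_le1.
have q_sa := contractive_idempotent_sa (qR q Jq) q_le1.
by rewrite -(eR q Jq) -{1}q_sa -e_sa -starM (qR e Je).
Qed.

End LeftIdeal.

Lemma cstar_algebra_op : cstar_algebra (fun x y => y ** x) star.
Proof.
split=> /=.
- by move=> x y z; rewrite mulA.
- by move=> x y z; rewrite mulDr.
- by move=> x y z; rewrite mulDl.
- by move=> a x y; rewrite mulZr.
- by move=> a x y; rewrite mulZl.
- by move=> x y; rewrite mulrC (cs_normM HA).
- exact: starD.
- exact: starZ.
- exact: starK.
- by move=> x y; rewrite starM.
- by move=> x; rewrite -{1}(starK x) (cs_cstar HA) !normE nrm_star.
Qed.

Lemma quasi_identity_op J e :
  quasi_identity (fun x y => y ** x) J e <-> quasi_identity mul J e.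
Proof.
by split=> -[Je qe]; split=> // r Jr;
  rewrite {1}(qe r Jr) /= (addrC (r ** e)) mulA.
Qed.

End CstarAlgebra.

Theorem corollary4p6 (R : realType) (V : completeNormedModType R[i])
    (mul : V -> V -> V) (star : V -> V) (HA : cstar_algebra mul star)
    (J : set V) :
  (left_ideal mul J ->
     ((exists e, quasi_identity mul J e /\ contractive e) <->
      (exists e, right_identity mul J e /\ contractive e)) /\
     (forall e, right_identity mul J e -> contractive e ->
        forall q, quasi_identity mul J q -> contractive q -> q = e)) /\
  (right_ideal mul J ->
     ((exists e, quasi_identity mul J e /\ contractive e) <->
      (exists e, left_identity mul J e /\ contractive e)) /\
     (forall e, left_identity mul J e -> contractive e ->
        forall q, quasi_identity mul J q -> contractive q -> q = e)).
Proof.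
have HAop := cstar_algebra_op HA.
split=> [[_ _ mulJ] | [_ _ mulJ]]; split=> [|e He Ce q Hq Cq].
- by split=> -[e [/(quasi_identityP HA mulJ) He Ce]]; exists e.
- exact: (quasi_identity_unique HA mulJ He Ce Hq Cq).
- split=> -[e [He Ce]]; exists e; split=> //.
    exact/(quasi_identityP HAop mulJ)/(quasi_identity_op HA).
  exact/(quasi_identity_op HA)/(quasi_identityP HAop mulJ).
- move/(quasi_identity_op HA): Hq => Hq.
  exact: (quasi_identity_unique HAop mulJ He Ce Hq Cq).
Qed.
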